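(* In the online tolling setting described in the context, let $\bm{\pi}$ be the algorithm that sets $\boldsymbol{\tau}^{(1)}=\bm{0}$ and, after observing the equilibrium edge flows $\bm{x}^t$ under $\boldsymbol{\tau}^{(t)}$, updates $\boldsymbol{\tau}^{(t+1)}=(\boldsymbol{\tau}^{(t)}-\gamma(\bm{c}-\bm{x}^t))_+$ (componentwise positive part) with step size $\gamma>0$. Then $$V_T(\bm{\pi})\le\frac{1}{\gamma}\,\mathbb{E}\big[\|\boldsymbol{\tau}^{(T+1)}\|_2\big].$$
   Context: Network: directed graph $G=(V,E)$, edge capacities $\bm{c}=\{c_e\}$, fixed edge travel times $l_e$. Finite user set $\mathcal{U}$; user $u$ has fixed outside-option cost $\lambda_u$. In each period $t=1,\dots,T$, O-D pairs $w^t_u$ and values of time $v^t_u\ge0$ are drawn i.i.d. across periods from a distribution $\mathcal{D}$; $\mathcal{P}^t_u$ is the finite set of paths for $w^t_u$. Given tolls $\boldsymbol{\tau}^{(t)}$, the period-$t$ equilibrium assigns each user to a path $P$ or the outside option so as to minimize cost ($v^t_u\sum_{e\in P}l_e+\sum_{e\in P}\tau^{(t)}_e$ for a path, $\lambda_u$ for the outside option; capacities need not be respected), with edge flows $x^t_e$ equal to the number of users whose chosen path contains $e$. Constraint violation: $V_T(\bm{\pi})=\mathbb{E}\big[\|(\sum_{t=1}^T(\bm{x}^t-\bm{c}))_+\|_2\big]$, expectation over $\mathcal{D}$. *)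

From HB Require Import structures.
From mathcomp Require Import all_boot all_order all_algebra.
From mathcomp Require Import all_classical all_reals all_analysis.
Set Implicit Arguments. Unset Strict Implicit. Unset Printing Implicit Defensive.
Import Order.TTheory GRing.Theory Num.Theory.
Local Open Scope ring_scope.
Local Open Scope classical_set_scope.

Definition is_path (V E : finType) (tl hd : E -> V) (o d : V) (p : seq E) : bool :=
  if p is e :: p' then
    [&& tl e == o, path (fun e1 e2 => hd e1 == tl e2) e p' & hd (last e p') == d]
  else o == d.

Definition path_cost (R : realType) (E : finType) (l tau : E -> R) (v : R)
    (p : seq E) : R :=
  v * (\sum_(e <- p) l e) + \sum_(e <- p) tau e.

(* An assignment a (None = outside option, Some P = path P) is an equilibrium
   for O-D pairs w, values of time v and tolls tau if every user picks a
   cost-minimizing option among its paths and its outside option. *)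
Definition is_equilibrium (R : realType) (V E U : finType)
    (routes : V -> V -> seq (seq E)) (l : E -> R) (lam : U -> R)
    (tau : E -> R) (w : U -> V * V) (v : U -> R)
    (a : U -> option (seq E)) : Prop :=
  forall u, match a u with
  | None => forall q, q \in routes (w u).1 (w u).2 ->
              lam u <= path_cost l tau (v u) q
  | Some p => [/\ p \in routes (w u).1 (w u).2,
                  path_cost l tau (v u) p <= lam u &
                  forall q, q \in routes (w u).1 (w u).2 ->
                    path_cost l tau (v u) p <= path_cost l tau (v u) q]
  end.

Definition flow (R : realType) (E U : finType) (a : U -> option (seq E))
    (e : E) : R :=
  (#|[set u | if a u is Some p then e \in p else false]|)%:R.

(* Tolls of the algorithm: index t stands for period t+1, so
   tolls 0 = tau^(1) = 0 and tolls t.+1 = (tolls t - gamma (c - x^t))_+ ,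
   where sel t tau is the equilibrium assignment in (0-indexed) period t
   under tolls tau. *)
Fixpoint tolls (R : realType) (E U : finType) (gamma : R) (c : E -> R)
    (sel : nat -> (E -> R) -> U -> option (seq E)) (t : nat) : E -> R :=
  match t with
  | 0 => fun _ => 0
  | t'.+1 => let tau := @tolls R E U gamma c sel t' in
      fun e => Num.max 0 (tau e - gamma * (c e - @flow R E U (sel t' tau) e))
  end.

Definition flows (R : realType) (E U : finType) (gamma : R) (c : E -> R)
    (sel : nat -> (E -> R) -> U -> option (seq E)) (t : nat) : E -> R :=
  @flow R E U (sel t (tolls gamma c sel t)).

Definition norm2 (R : realType) (E : finType) (y : E -> R) : R :=
  Num.sqrt (\sum_e y e ^+ 2).

Definition iid_seq (R : realType) (d : measure_display) (Th : measurableType d)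
    (d' : measure_display) (Om : measurableType d')
    (P : probability Om R) (theta : nat -> Om -> Th) (D : probability Th R) : Prop :=
  (forall t, measurable_fun setT (theta t)) /\
  forall (n : nat) (A : nat -> set Th), (forall i, measurable (A i)) ->
    P [set om | forall i, (i < n)%N -> A i (theta i om)] =
    (\prod_(i < n) D (A i))%E.

From HB Require Import structures.
From mathcomp Require Import all_boot all_order all_algebra.
From mathcomp Require Import all_classical all_reals all_analysis.
From mathcomp Require Import measurable_realfun.
Import Order.TTheory GRing.Theory Num.Theory.
Local Open Scope ring_scope.
Local Open Scope classical_set_scope.

(* The bound holds pathwise, for any flows whatsoever: the update
   tau <- (tau + gamma (x - c))_+ only ever truncates from below, so by
   induction tau^(T+1) >= gamma * (sum_t (x^t - c))_+ componentwise.  Taking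
   Euclidean norms and then expectations gives the claim. *)

Lemma max0_sum_le_max0_recursion {R : realDomainType} {tau g : nat -> R} :
  0 <= tau 0 -> (forall t, tau t.+1 = Num.max 0 (tau t + g t)) ->
  forall t, Num.max 0 (\sum_(s < t) g s) <= tau t.
Proof.
move=> tau0_ge0 tauS; elim=> [|t IHt]; first by rewrite big_ord0 maxxx.
have [tau_ge0 sum_le_tau] : 0 <= tau t /\ \sum_(s < t) g s <= tau t.
  by move: IHt; rewrite ge_max => /andP.
by rewrite big_ord_recr /= tauS ge_max le_max lexx /= le_max lerD2r sum_le_tau orbT.
Qed.

Lemma tollsS {R : realType} {E U : finType} (gamma : R) (c : E -> R)
    (sel : nat -> (E -> R) -> U -> option (seq E)) (t : nat) (e : E) :
  tolls gamma c sel t.+1 e =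
  Num.max 0 (tolls gamma c sel t e + gamma * (flows gamma c sel t e - c e)).
Proof. by rewrite /= -mulrN opprB. Qed.

Lemma max0_violation_le_tolls {R : realType} {E U : finType} (gamma : R)
    (c : E -> R) (sel : nat -> (E -> R) -> U -> option (seq E)) (T : nat)
    (e : E) :
  0 < gamma ->
  Num.max 0 (\sum_(t < T) (flows gamma c sel t e - c e))
    <= gamma^-1 * tolls gamma c sel T e.
Proof.
move=> gamma_gt0.
rewrite ler_pdivlMl // maxr_pMr ?(ltW gamma_gt0) // mulr0 mulr_sumr.
exact: max0_sum_le_max0_recursion (lexx 0) (fun t => tollsS gamma c sel t e) T.
Qed.

Lemma norm2_ge0 {R : realType} {E : finType} (y : E -> R) : 0 <= norm2 y.
Proof. exact: sqrtr_ge0. Qed.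

Lemma norm2_le {R : realType} {E : finType} (x y : E -> R) :
  (forall e, 0 <= x e <= y e) -> norm2 x <= norm2 y.
Proof.
move=> x_between; rewrite /norm2 ler_sqrt; last by apply: sumr_ge0 => e _; exact: sqr_ge0.
apply: ler_sum => e _; have /andP[x_ge0 x_le_y] := x_between e.
by rewrite ler_sqr ?nnegrE // (le_trans x_ge0 x_le_y).
Qed.

Lemma norm2Z {R : realType} {E : finType} (k : R) (y : E -> R) :
  0 <= k -> norm2 (fun e => k * y e) = k * norm2 y.
Proof.
move=> k_ge0; rewrite /norm2.
under eq_bigr do rewrite exprMn.
by rewrite -mulr_sumr sqrtrM ?sqr_ge0 // sqrtr_sqr ger0_norm.
Qed.

Lemma measurable_norm2 {R : realType} {E : finType} {d} {T : measurableType d}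
    (f : T -> E -> R) :
  (forall e, measurable_fun setT (f ^~ e)) ->
  measurable_fun setT (fun x => norm2 (f x)).
Proof.
move=> mf; apply: (measurableT_comp (continuous_measurable_fun (@sqrt_continuous R))).
by apply: measurable_sum => e; apply: measurable_funX.
Qed.

Lemma ge0_expectationZl {R : realType} {d} {T : measurableType d}
    (P : probability T R) (k : R) (Y : T -> R) :
  0 <= k -> measurable_fun setT Y -> (forall x, 0 <= Y x) ->
  ('E_P[fun x => (k * Y x)%R] = k%:E * 'E_P[Y])%E.
Proof.
move=> k_ge0 mY Y_ge0; rewrite !expectation.unlock.
under eq_integral do rewrite EFinM.
by apply: ge0_integralZl => //; [exact/measurable_EFinP | move=> x _; rewrite lee_fin].
Qed.

Lemma measurable_tolls {R : realType} {E U : finType} {d} {Om : measurableType d}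
    {gamma : R} {c : E -> R} {sel : Om -> nat -> (E -> R) -> U -> option (seq E)} :
  (forall t e, measurable_fun setT (fun om => flows gamma c (sel om) t e)) ->
  forall t e, measurable_fun setT (fun om => tolls gamma c (sel om) t e).
Proof.
move=> mflows; elim=> [|t IHt] e; first exact: measurable_cst.
under eq_fun do rewrite tollsS.
apply: measurable_maxr => //; apply: measurable_funD => //.
by apply: measurable_funM => //; apply: measurable_funB.
Qed.

Theorem lemma3 (R : realType) (V E U : finType) (tl hd : E -> V)
  (routes : V -> V -> seq (seq E))
  (Hroutes : forall o d p, p \in routes o d -> is_path tl hd o d p)
  (c l : E -> R) (Hc : forall e, 0 <= c e) (Hl : forall e, 0 <= l e)
  (lam : U -> R)
  (d : measure_display) (Th : measurableType d)
  (od : Th -> U -> V * V) (vot : Th -> U -> R)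
  (Hvot : forall th u, 0 <= vot th u)
  (D : probability Th R)
  (d' : measure_display) (Om : measurableType d') (P : probability Om R)
  (theta : nat -> Om -> Th) (Hiid : iid_seq P theta D)
  (sel : Om -> nat -> (E -> R) -> U -> option (seq E))
  (Hsel : forall om t tau,
     is_equilibrium routes l lam tau (od (theta t om)) (vot (theta t om))
       (sel om t tau))
  (gamma : R) (Hgamma : 0 < gamma)
  (Hmeas : forall t e, measurable_fun setT (fun om => flows gamma c (sel om) t e))
  (T : nat) :
  ('E_P[fun om => norm2 (fun e : E =>
      Num.max 0 (\sum_(t < T) (flows gamma c (sel om) t e - c e)))%R]
   <= (gamma^-1)%R%:E * 'E_P[fun om => norm2 (tolls gamma c (sel om) T)])%E.
Proof.
have gammaV_ge0 : 0 <= gamma^-1 by rewrite invr_ge0 ltW.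
have m_tolls : measurable_fun setT (fun om => norm2 (tolls gamma c (sel om) T)).
  exact: measurable_norm2 (measurable_tolls Hmeas T).
have m_violation : measurable_fun setT (fun om => norm2 (fun e =>
    Num.max 0 (\sum_(t < T) (flows gamma c (sel om) t e - c e)))).
  apply: measurable_norm2 => e; apply: measurable_maxr => //.
  by apply: measurable_sum => t; apply: measurable_funB.
rewrite -(ge0_expectationZl P _ _ gammaV_ge0 m_tolls); last by move=> om; exact: norm2_ge0.
apply: expectation_le => //.
- by apply: measurable_funM.
- by move=> om; exact: norm2_ge0.
- by move=> om; rewrite mulr_ge0 ?norm2_ge0.
apply: aeW => om; rewrite -norm2Z //; apply: norm2_le => e.
by rewrite le_max lexx max0_violation_le_tolls.
Qed.
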